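(* Consider the partial-block protocol described in the context, on a finite set of agents $A$ with a connected undirected connectivity graph $G=(A,E)$, and suppose the block length is $L=|A|$. Then a deadlock never occurs: for every epoch $t$ it is not the case that $D(i)$ holds for all $i\in A$.
   Context: Let $A$ be a finite set of agents (agent IDs) and $G=(A,E)$ a connected undirected graph; $\Gamma_i$ denotes the set of neighbors of $i$. Fix an integer $L\ge 1$ (block length). Each agent $i$ maintains a partial block $pb_i\subseteq A$ (a set of agent IDs). The system runs in epochs $t=0,1,2,\dots$; $pb_i^{(t)}$ is agent $i$'s partial block at the start of epoch $t$. In each epoch: (C1) every agent $i$ with $i\notin pb_i$ adds $i$ to $pb_i$; (C2) every agent $i$ sends its $pb_i$ to every neighbor $j\in\Gamma_i$. When an agent $i$ receives a partial block $P$ (from a neighbor or via a direct message) it applies the rule: (R1) if $|P\setminus\{i\}|>|pb_i\setminus\{i\}|$, agent $i$ sets $pb_i:=P$; (R2) otherwise, if $|P\setminus\{i\}|=|pb_i\setminus\{i\}|$ and $P\neq pb_i$, agent $i$ sends its current $pb_i$ directly to every agent in $P\setminus pb_i$, each of which processes it by the same rule; (R3) otherwise the received block is discarded. All received partial blocks are assumed to pass all validity and similarity checks. For an agent $i$ and epoch $t$, the predicate $D(i)$ means: $pb_i^{(t)}=pb_i^{(t+1)}$ and $|pb_i^{(t)}|<L$. A deadlock at epoch $t$ means that $D(i)$ holds for all $i\in A$. *)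

From mathcomp Require Import all_boot.
Set Implicit Arguments. Unset Strict Implicit. Unset Printing Implicit Defensive.

Section Protocol.
Variable A : finType.

(* A configuration: the partial block pb_i of every agent i. *)
Definition config := {ffun A -> {set A}}.

(* A message in transit: (receiver, partial block carried). *)
Definition msg := (A * {set A})%type.

(* Agent j processes a received partial block P (rules R1, R2, R3).
   Returns the new configuration and the direct messages it sends. *)
Definition process (s : config) (j : A) (P : {set A}) : config * seq msg :=
  let own := s j in
  if #|P :\ j| > #|own :\ j| then ([ffun k => if k == j then P else s k], [::])
  else if (#|P :\ j| == #|own :\ j|) && (P != own)
       then (s, [seq (k, own) | k <- enum (P :\: own)])
       else (s, [::]).

(* run s q s' : starting from configuration s with pending messages q,
   processing the messages one by one in SOME order (any pending message may
   be delivered next; messages generated by R2 are added to the pool) until no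
   message is pending, yields configuration s'. *)
Inductive run : config -> seq msg -> config -> Prop :=
| run_done s : run s [::] s
| run_step s q1 j P q2 s' :
    run (process s j P).1 (q1 ++ q2 ++ (process s j P).2) s' ->
    run s (q1 ++ (j, P) :: q2) s'.

Definition stepC1 (s : config) : config := [ffun i => i |: s i].

Definition initial_msgs (adj : rel A) (s : config) : seq msg :=
  [seq (j, s i) | i <- enum A, j <- [seq j <- enum A | adj i j]].

Definition epoch (adj : rel A) (s s' : config) : Prop :=
  run (stepC1 s) (initial_msgs adj (stepC1 s)) s'.

(* An execution: pb t is the configuration at the start of epoch t. *)
Definition execution (adj : rel A) (pb : nat -> config) : Prop :=
  forall t, epoch adj (pb t) (pb t.+1).

Definition D (L : nat) (pb : nat -> config) (t : nat) (i : A) : Prop :=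
  pb t i = pb t.+1 i /\ #|pb t i| < L.

Definition deadlock (L : nat) (pb : nat -> config) (t : nat) : Prop :=
  forall i : A, D L pb t i.

End Protocol.

From mathcomp Require Import all_boot.
Set Implicit Arguments. Unset Strict Implicit. Unset Printing Implicit Defensive.

(* The quantity #|pb_j :\ j| can only grow while messages are processed, and
   step C1 leaves it unchanged.  In a deadlocked epoch the configuration is the
   same before and after, so it never grows: no agent ever adopts a block (R1),
   and every message delivered during the epoch, together with the direct
   replies it triggers (R2), is rejected.  Comparing the blocks of two
   neighbours through the messages they exchange then shows that neighbours
   hold blocks of equal size, and that they hold equal blocks, since otherwise
   some agent k outside pb_j would receive pb_j by R2, with
   #|pb_j :\ k| = #|pb_k| > #|pb_k :\ k|, and adopt it.  By connectivity all
   blocks are then equal, and as every agent belongs to its own block they all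
   equal A, of size L = #|A|: not a deadlock. *)

Lemma connect_fun_eq (T : finType) (U : eqType) (e : rel T) (f : T -> U) :
  (forall x y, e x y -> f x = f y) -> forall x y, connect e x y -> f x = f y.
Proof.
move=> f_e x _ /connectP[p e_p ->].
by elim: p x e_p => //= y p IHp x /andP[/f_e-> /IHp].
Qed.

Section Processing.
Variable A : finType.
Implicit Types (s : config A) (j k : A) (P : {set A}).

Definition peer_count s j := #|s j :\ j|.

Definition rejects s j P := #|P :\ j| <= peer_count s j.

Definition replies_to s j P := (#|P :\ j| == peer_count s j) && (P != s j).

(* Delivering [(j, P)] in [s] triggers no R1, neither at [j] nor at any
   receiver of the direct replies sent by [j] under R2. *)
Definition quiet s (x : msg A) :=
  let: (j, P) := x in
  rejects s j P /\ (replies_to s j P -> {in P :\: s j, forall k, rejects s k (s j)}).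

Lemma process_rejected s j P : rejects s j P ->
  process s j P = (s, if replies_to s j P then [seq (k, s j) | k <- enum (P :\: s j)]
                      else [::]).
Proof.
rewrite /rejects /process /replies_to /peer_count leqNgt => /negbTE->.
by case: ifP.
Qed.

Lemma process_adopted s j P : ~~ rejects s j P ->
  process s j P = ([ffun k => if k == j then P else s k], [::]).
Proof. by rewrite /rejects /process /peer_count -ltnNge => ->. Qed.

Lemma peer_count_adopt s j P : ~~ rejects s j P ->
  peer_count s j < peer_count (process s j P).1 j.
Proof.
by move=> adopt; rewrite process_adopted // /peer_count ffunE eqxx ltnNge.
Qed.

Lemma peer_count_process s j P k : peer_count s k <= peer_count (process s j P).1 k.
Proof.
have [rej|adopt] := boolP (rejects s j P); first by rewrite process_rejected.
have [->|k_j] := eqVneq k j; first exact: ltnW (peer_count_adopt adopt).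
by rewrite process_adopted // /peer_count ffunE (negbTE k_j).
Qed.

Lemma peer_count_run s q s' k : run s q s' -> peer_count s k <= peer_count s' k.
Proof.
elim=> // {}s q1 j P q2 {}s' _ IH.
exact: leq_trans (peer_count_process s j P k) IH.
Qed.

Lemma run_quiet s q s' : run s q s' -> (forall k, peer_count s' k <= peer_count s k) ->
  s' = s /\ {in q, forall x, quiet s x}.
Proof.
elim=> [{}s _|{}s q1 j P q2 {}s' run_s' IH s'_le]; first by [].
have [rej | adopt] := boolP (rejects s j P); last first.
  have := leq_trans (peer_count_adopt adopt) (peer_count_run j run_s').
  by rewrite ltnNge s'_le.
move: IH; rewrite process_rejected //= => /(_ s'_le)[-> quiet_pool].
split=> // x; rewrite !mem_cat inE => /or3P[in_q1 | /eqP-> | in_q2].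
- by apply: quiet_pool; rewrite !mem_cat in_q1.
- split=> // replies k kP.
  have reply_k : (k, s j) \in q1 ++ q2 ++
      (if replies_to s j P then [seq (k, s j) | k <- enum (P :\: s j)] else [::]).
    by rewrite replies !mem_cat map_f ?mem_enum ?orbT.
  by have [] := quiet_pool _ reply_k.
- by apply: quiet_pool; rewrite !mem_cat in_q2 orbT.
Qed.

Lemma peer_count_stepC1 s k : peer_count (stepC1 s) k = peer_count s k.
Proof. by rewrite /peer_count ffunE setDUl setDv set0U. Qed.

Lemma epoch_fixed_quiet (adj : rel A) s : epoch adj s s ->
  stepC1 s = s /\ {in initial_msgs adj s, forall x, quiet s x}.
Proof.
rewrite /epoch; set s1 := stepC1 s => run_s.
have [k | s_fixed quiet_msgs] := run_quiet run_s; first by rewrite peer_count_stepC1.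
by rewrite -s_fixed in quiet_msgs.
Qed.

End Processing.

Section FixedEpoch.
Variables (A : finType) (adj : rel A) (s : config A).
Hypothesis adj_sym : symmetric adj.
Hypothesis adj_conn : forall x y : A, connect adj x y.
Hypothesis fixed : epoch adj s s.

Lemma mem_block i : i \in s i.
Proof. by have [<- _] := epoch_fixed_quiet fixed; rewrite ffunE setU11. Qed.

Lemma card_block i : #|s i| = (peer_count s i).+1.
Proof. by rewrite (cardsD1 i) mem_block. Qed.

Lemma quiet_edge i j : adj i j -> quiet s (j, s i).
Proof.
move=> adj_ij; have [_ quiet_msgs] := epoch_fixed_quiet fixed; apply: quiet_msgs.
by apply/allpairsPdep; exists i, j; rewrite mem_enum mem_filter adj_ij mem_enum.
Qed.

Lemma card_block_le_edge i j : adj i j -> #|s i| <= #|s j|.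
Proof.
move=> /quiet_edge[rej _].
by rewrite (card_block j) (cardsD1 j (s i)) -add1n leq_add ?leq_b1.
Qed.

Lemma card_block_const x y : #|s x| = #|s y|.
Proof.
apply: (connect_fun_eq (f := fun i => #|s i|)) (adj_conn x y) => i j adj_ij.
by apply/eqP; rewrite eqn_leq !card_block_le_edge // adj_sym.
Qed.

Lemma block_eq_edge i j : adj i j -> s i = s j.
Proof.
move=> adj_ij; apply/eqP/contraT => neq_ij.
have [rej replies] := quiet_edge adj_ij.
have [k k_ij] : exists k, k \in s i :\: s j.
  apply/set0Pn; apply: contra neq_ij; rewrite setD_eq0 => sub_ij.
  by rewrite eqEcard sub_ij (card_block_const i j) leqnn.
have card_sij : #|s i| = #|s j| := card_block_const i j.
have do_reply : replies_to s j (s i).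
  rewrite /replies_to neq_ij andbT eqn_leq; apply/andP; split=> //.
  by rewrite -ltnS -card_block -card_sij (cardsD1 j (s i)) -add1n leq_add2r leq_b1.
have := replies do_reply k k_ij; move: k_ij; rewrite inE => /andP[k_not_j _].
rewrite /rejects -ltnS -card_block (card_block_const k j).
by rewrite (cardsD1 k (s j)) (negbTE k_not_j) ltnn.
Qed.

Lemma block_setT x : s x = setT.
Proof.
apply/setP=> y; rewrite inE.
by rewrite (connect_fun_eq block_eq_edge (adj_conn x y)) mem_block.
Qed.

End FixedEpoch.

Theorem theorem1 (A : finType) (adj : rel A)
  (hnonempty : 0 < #|A|)
  (hsym : symmetric adj) (hirr : irreflexive adj)
  (hconn : forall x y : A, connect adj x y)
  (pb : nat -> config A) (hexec : execution adj pb) :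
  forall t : nat, ~ deadlock #|A| pb t.
Proof.
move=> t dead; have [x _] := card_gt0P hnonempty.
have fixed : pb t.+1 = pb t by apply/ffunP => i; have [<-] := dead i.
have epoch_fixed : epoch adj (pb t) (pb t) by rewrite -{2}fixed; apply: hexec.
have [_] := dead x.
by rewrite (block_setT hsym hconn epoch_fixed) cardsT ltnn.
Qed.
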